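(* Let $m,n\ge3$. The cycles $C_m$ and $C_n$ are never strongly disjoint. Moreover, $C_m$ and $C_n$ are weakly disjoint if and only if $\gcd(m,n)=1$.
   Context: A weight function on finite $U$ is $\alpha:U\times U\to\mathbb{R}$, $\alpha\ge0$, symmetric, summing to $1$; degree $p(u)=\sum_{u'}\alpha(u,u')$; a graph is $(U,\alpha)$. $C_k$ ($k\ge3$) is the cycle on vertices $u_1,\dots,u_k$ with $\alpha(u_i,u_{i\pm1})=1/(2k)$ (indices mod $k$) and all other weights $0$. For graphs $(U,\alpha)$, $(V,\beta)$ with degrees $p,q$, a weight joining is a weight function $\gamma$ on $U\times V$ with degree $r(u,v)=\sum_{(u',v')}\gamma((u,v),(u',v'))$ such that $\sum_v r(u,v)=p(u)$, $\sum_u r(u,v)=q(v)$, $p(u)\sum_{\tilde v}\gamma((u,v),(u',\tilde v))=\alpha(u,u')r(u,v)$ and $q(v)\sum_{\tilde u}\gamma((u,v),(\tilde u,v'))=\beta(v,v')r(u,v)$ for all $u,u',v,v'$. The graphs are strongly disjoint if the only weight joining is $\alpha\otimes\beta$, $(\alpha\otimes\beta)((u,v),(u',v'))=\alpha(u,u')\beta(v,v')$; weakly disjoint if every weight joining has degree $r(u,v)=p(u)q(v)$. *)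

From HB Require Import structures.
From mathcomp Require Import all_boot all_order all_algebra.
From mathcomp Require Import reals.
Set Implicit Arguments. Unset Strict Implicit. Unset Printing Implicit Defensive.
Import Order.TTheory GRing.Theory Num.Theory.
Local Open Scope ring_scope.

Section WeightDefs.
Variable R : realType.

Definition weight_fun (U : finType) (a : U -> U -> R) : Prop :=
  [/\ forall x y, 0 <= a x y,
      forall x y, a x y = a y x &
      \sum_(x : U) \sum_(y : U) a x y = 1].

Definition wdeg (U : finType) (a : U -> U -> R) (u : U) : R :=
  \sum_(u' : U) a u u'.

Definition cycle_w (k : nat) (i j : 'I_k) : R :=
  if (j == ordS i) || (i == ordS j) then (2 * k)%:R^-1 else 0.

Definition weight_joining (U V : finType) (a : U -> U -> R) (b : V -> V -> R)
    (g : (U * V)%type -> (U * V)%type -> R) : Prop :=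
  [/\ weight_fun g,
      forall u, \sum_(v : V) wdeg g (u, v) = wdeg a u,
      forall v, \sum_(u : U) wdeg g (u, v) = wdeg b v,
      forall u u' v, wdeg a u * (\sum_(v' : V) g (u, v) (u', v'))
                     = a u u' * wdeg g (u, v) &
      forall u v v', wdeg b v * (\sum_(u' : U) g (u, v) (u', v'))
                     = b v v' * wdeg g (u, v)].

Definition wtensor (U V : finType) (a : U -> U -> R) (b : V -> V -> R)
    (x y : (U * V)%type) : R := a x.1 y.1 * b x.2 y.2.

Definition strongly_disjoint (U V : finType) (a : U -> U -> R) (b : V -> V -> R) : Prop :=
  forall g, weight_joining a b g -> forall x y, g x y = wtensor a b x y.

Definition weakly_disjoint (U V : finType) (a : U -> U -> R) (b : V -> V -> R) : Prop :=
  forall g, weight_joining a b g ->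
    forall u v, wdeg g (u, v) = wdeg a u * wdeg b v.

End WeightDefs.
Arguments cycle_w R k i j : clear implicits.

From HB Require Import structures.
From mathcomp Require Import all_boot all_order all_algebra.
From mathcomp Require Import reals.
From mathcomp Require Import ring lra.
Set Implicit Arguments. Unset Strict Implicit. Unset Printing Implicit Defensive.
Import Order.TTheory GRing.Theory Num.Theory.
Local Open Scope ring_scope.

(* In a weight joining of C_m and C_n, a vertex (u, v) of the torus only sends
   weight to the four vertices (u +- 1, v +- 1), and each marginal condition
   says that the weight sent towards a fixed neighbour of u (or of v) is half
   the degree r(u, v).  Comparing these four equations, the weight sent towards
   (u + 1, v + 1) equals the weight sent towards (u - 1, v - 1), so by symmetry
   of the joining it is invariant under the diagonal shift; likewise for the
   anti-diagonal.  When gcd(m, n) = 1 both shifts are transitive on the torus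
   (Chinese remainder theorem), so r is constant, i.e. r = 1/(mn).
   Conversely, for d = gcd(m, n), the walk moving only along (+1, +1) inside
   the classes u = v (mod d) is a joining; it never moves along (+1, -1), so it
   is not the product joining, and when d > 1 its degree vanishes at (0, 1). *)

Section Sums.
Variable R : numDomainType.

Lemma sum_indicator (I : finType) (F : I -> R) i :
  \sum_j (j == i)%:R * F j = F i.
Proof.
under eq_bigr do rewrite mulr_natl mulrb.
by rewrite -big_mkcond big_pred1_eq.
Qed.

Lemma sum_support2 (I : finType) (F : I -> R) i j : i != j ->
  (forall l, l != i -> l != j -> F l = 0) -> \sum_l F l = F i + F j.
Proof.
move=> neq_ij F0; rewrite (bigD1 i) //= (bigD1 j) 1?eq_sym //=.
by rewrite big1 ?addr0 // => l /andP[lj li]; apply: F0.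
Qed.

Lemma sum_pairE (I J : finType) (F : I * J -> R) :
  \sum_x F x = \sum_i \sum_j F (i, j).
Proof. by rewrite pair_bigA; apply: eq_bigr => -[]. Qed.

Lemma psumr_gt0 (I : finType) (F : I -> R) i :
  (forall j, 0 <= F j) -> 0 < F i -> 0 < \sum_j F j.
Proof.
move=> F_ge0 Fi_gt0; rewrite (bigD1 i) //=.
by apply: ltr_wpDr => //; apply: sumr_ge0.
Qed.

End Sums.

Section CyclicOrdinals.
Variable k : nat.
Implicit Types i j : 'I_k.

Lemma eq_ordS_ord_pred i j : (i == ordS j) = (j == ord_pred i).
Proof. by apply/eqP/eqP => ->; rewrite ?ordSK ?ord_predK. Qed.

Lemma val_iter_ordS t i : val (iter t (@ordS k) i) = ((i + t) %% k)%N.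
Proof.
elim: t => [|t IH] /=; first by rewrite addn0 modn_small.
by rewrite IH -addn1 modnDml addn1 addnS.
Qed.

Lemma iter_ord_pred_ordS t i : iter t (@ord_pred k) (iter t (@ordS k) i) = i.
Proof.
by elim: t i => // t IH i; rewrite [iter t.+1 _ i]iterSr iterS IH ordSK.
Qed.

Lemma ordS_adjacent i : (ordS i == ordS i) || (ordS i == ord_pred i).
Proof. by rewrite eqxx. Qed.

Lemma ord_pred_adjacent i :
  (ord_pred i == ordS i) || (ord_pred i == ord_pred i).
Proof. by rewrite eqxx orbT. Qed.

Lemma iter_ordS_onto i j : exists t, iter t (@ordS k) i = j.
Proof.
exists (k - i + j)%N; apply: val_inj.
by rewrite val_iter_ordS addnA subnKC ?(ltnW (ltn_ord i)) // modnDl modn_small.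
Qed.

Lemma ordS_invariant_const (T : Type) (f : 'I_k -> T) :
  (forall i, f (ordS i) = f i) -> forall i j, f i = f j.
Proof.
move=> fS i j; have [t <-] := iter_ordS_onto j i.
by elim: t => //= t <-.
Qed.

Hypothesis k_gt2 : (2 < k)%N.

Lemma ordS_ordS_neq i : ordS (ordS i) != i.
Proof.
apply/eqP => /(congr1 val); rewrite (val_iter_ordS 2 i) => ii2.
have : (i + 2 == i + 0 %[mod k])%N by rewrite ii2 addn0 modn_small.
by rewrite eqn_modDl mod0n modn_small.
Qed.

Lemma ordS_neq_ord_pred i : ordS i != ord_pred i.
Proof.
apply/eqP => /(congr1 (@ordS k)); rewrite ord_predK; apply/eqP.
exact: ordS_ordS_neq.
Qed.

End CyclicOrdinals.

Section CoprimeTorus.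
Variables m n : nat.
Hypothesis mn_coprime : coprime m n.

Lemma iter_ordS_pair_onto (x u : 'I_m) (y v : 'I_n) :
  exists t, iter t (@ordS m) x = u /\ iter t (@ordS n) y = v.
Proof.
exists (chinese m n (m - x + u) (n - y + v)).
by split; apply: val_inj; rewrite val_iter_ordS -modnDmr
  ?chinese_modl ?chinese_modr // modnDmr addnA subnKC ?(ltnW (ltn_ord _)) //
  modnDl modn_small.
Qed.

Lemma diag_invariant_const (T : Type) (f : 'I_m -> 'I_n -> T) :
  (forall u v, f (ordS u) (ordS v) = f u v) ->
  forall u v u' v', f u v = f u' v'.
Proof.
move=> fS u v u' v'; have [t [<- <-]] := iter_ordS_pair_onto u' u v' v.
by elim: t => //= t <-.
Qed.

Lemma antidiag_invariant_const (T : Type) (f : 'I_m -> 'I_n -> T) :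
  (forall u v, f (ordS u) (ord_pred v) = f u v) ->
  forall u v u' v', f u v = f u' v'.
Proof.
move=> fS u v u' v'; have [t [<- v_v']] := iter_ordS_pair_onto u' u v v'.
rewrite -[v](iter_ord_pred_ordS t) {}v_v'.
by elim: t => //= t <-.
Qed.

End CoprimeTorus.

Section Joinings.
Variable R : realType.
Variables (U V : finType) (a : U -> U -> R) (b : V -> V -> R).
Variable g : U * V -> U * V -> R.
Hypothesis g_joining : weight_joining a b g.

Lemma joining_transition_l u v u' : wdeg a u != 0 ->
  \sum_v' g (u, v) (u', v') = a u u' / wdeg a u * wdeg g (u, v).
Proof.
case: g_joining => _ _ _ g_l _ pu_neq0.
by apply: (mulfI pu_neq0); rewrite g_l; field.
Qed.

Lemma joining_transition_r u v v' : wdeg b v != 0 ->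
  \sum_u' g (u, v) (u', v') = b v v' / wdeg b v * wdeg g (u, v).
Proof.
case: g_joining => _ _ _ _ g_r qv_neq0.
by apply: (mulfI qv_neq0); rewrite g_r; field.
Qed.

Lemma joining_support_l u v u' v' : wdeg a u != 0 -> a u u' = 0 ->
  g (u, v) (u', v') = 0.
Proof.
move=> pu_neq0 a_uu'; have [[g_ge0 _ _] _ _ _ _] := g_joining.
have := joining_transition_l v u' pu_neq0; rewrite a_uu' !mul0r.
by move/psumr_eq0P; apply.
Qed.

Lemma joining_support_r u v u' v' : wdeg b v != 0 -> b v v' = 0 ->
  g (u, v) (u', v') = 0.
Proof.
move=> qv_neq0 b_vv'; have [[g_ge0 _ _] _ _ _ _] := g_joining.
have := joining_transition_r u v' qv_neq0; rewrite b_vv' !mul0r.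
by move/psumr_eq0P; apply.
Qed.

End Joinings.

Section Cycles.
Variable R : realType.
Variable k : nat.
Implicit Types i j : 'I_k.

Lemma cycle_w_ordS i : cycle_w R k i (ordS i) = (2 * k)%:R^-1.
Proof. by rewrite /cycle_w eqxx. Qed.

Lemma cycle_w_ord_pred i : cycle_w R k i (ord_pred i) = (2 * k)%:R^-1.
Proof. by rewrite /cycle_w ord_predK eqxx orbT. Qed.

Hypothesis k_gt2 : (2 < k)%N.

Let k_neq0 : k%:R != 0 :> R.
Proof. by rewrite pnatr_eq0 -lt0n (ltn_trans _ k_gt2). Qed.

Lemma cycle_wE i j :
  cycle_w R k i j = ((j == ordS i)%:R + (j == ord_pred i)%:R) / (2 * k)%:R.
Proof.
rewrite /cycle_w [i == ordS j]eq_ordS_ord_pred.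
have := ordS_neq_ord_pred k_gt2 i.
case: (j =P ordS i) => [jS|_]; case: (j =P ord_pred i) => [jP|_] /=.
- by rewrite -jS -jP eqxx.
- by rewrite addr0 mul1r.
- by rewrite add0r mul1r.
- by rewrite addr0 mul0r.
Qed.

Lemma wdeg_cycle i : wdeg (cycle_w R k) i = k%:R^-1.
Proof.
rewrite /wdeg (sum_support2 (ordS_neq_ord_pred k_gt2 i)).
  by rewrite cycle_w_ordS cycle_w_ord_pred natrM; field.
by move=> j /negbTE jS /negbTE jP; rewrite cycle_wE jS jP add0r mul0r.
Qed.

Lemma wdeg_cycle_neq0 i : wdeg (cycle_w R k) i != 0.
Proof. by rewrite wdeg_cycle invr_eq0. Qed.

Lemma adjacent_indicatorE i j : (j == ordS i) || (j == ord_pred i) ->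
  (j == ordS i)%:R + (j == ord_pred i)%:R = 1 :> R.
Proof.
have /negbTE SP := ordS_neq_ord_pred k_gt2 i.
by case/orP => /eqP->; rewrite eqxx ?SP 1?eq_sym ?SP ?addr0 ?add0r.
Qed.

Lemma cycle_transition i j : cycle_w R k i j / wdeg (cycle_w R k) i =
  ((j == ordS i)%:R + (j == ord_pred i)%:R) / 2.
Proof. by rewrite cycle_wE wdeg_cycle natrM; field. Qed.

End Cycles.

Section CycleJoinings.
Variable R : realType.
Variables m n : nat.
Hypotheses (m_gt2 : (2 < m)%N) (n_gt2 : (2 < n)%N).
Variable g : 'I_m * 'I_n -> 'I_m * 'I_n -> R.
Hypothesis g_joining : weight_joining (cycle_w R m) (cycle_w R n) g.

Lemma cycle_joining_step_l u v u' : (u' == ordS u) || (u' == ord_pred u) ->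
  2 * (g (u, v) (u', ordS v) + g (u, v) (u', ord_pred v)) = wdeg g (u, v).
Proof.
move=> adj; rewrite -(sum_support2 (F := fun v' => g (u, v) (u', v'))
  (ordS_neq_ord_pred n_gt2 v)).
  rewrite (joining_transition_l g_joining) ?wdeg_cycle_neq0 //.
  by rewrite cycle_transition // adjacent_indicatorE //; field.
move=> v' /negbTE v'S /negbTE v'P.
apply: (joining_support_r g_joining); first exact: wdeg_cycle_neq0.
by rewrite cycle_wE // v'S v'P add0r mul0r.
Qed.

Lemma cycle_joining_step_r u v v' : (v' == ordS v) || (v' == ord_pred v) ->
  2 * (g (u, v) (ordS u, v') + g (u, v) (ord_pred u, v')) = wdeg g (u, v).
Proof.
move=> adj; rewrite -(sum_support2 (F := fun u' => g (u, v) (u', v'))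
  (ordS_neq_ord_pred m_gt2 u)).
  rewrite (joining_transition_r g_joining) ?wdeg_cycle_neq0 //.
  by rewrite cycle_transition // adjacent_indicatorE //; field.
move=> u' /negbTE u'S /negbTE u'P.
apply: (joining_support_l g_joining); first exact: wdeg_cycle_neq0.
by rewrite cycle_wE // u'S u'P add0r mul0r.
Qed.

Lemma cycle_joining_diag_balance u v :
  g (u, v) (ordS u, ordS v) = g (u, v) (ord_pred u, ord_pred v).
Proof.
have := cycle_joining_step_l v (ordS_adjacent u).
have := cycle_joining_step_r u (ord_pred_adjacent v).
lra.
Qed.

Lemma cycle_joining_antidiag_balance u v :
  g (u, v) (ordS u, ord_pred v) = g (u, v) (ord_pred u, ordS v).
Proof.
have := cycle_joining_step_l v (ordS_adjacent u).
have := cycle_joining_step_r u (ordS_adjacent v).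
lra.
Qed.

Hypothesis mn_coprime : coprime m n.

Lemma wdeg_cycle_joining_const u v u' v' : wdeg g (u, v) = wdeg g (u', v').
Proof.
have [[_ g_sym _] _ _ _ _] := g_joining.
pose A u v := g (u, v) (ordS u, ordS v).
pose B u v := g (u, v) (ordS u, ord_pred v).
have deg_AB w z : wdeg g (w, z) = 2 * (A w z + B w z).
  by rewrite (cycle_joining_step_l z (ordS_adjacent w)).
have AS w z : A (ordS w) (ordS z) = A w z.
  by rewrite /A cycle_joining_diag_balance !ordSK g_sym.
have BS w z : B (ordS w) (ord_pred z) = B w z.
  by rewrite /B cycle_joining_antidiag_balance ordSK ord_predK g_sym.
by rewrite !deg_AB (diag_invariant_const mn_coprime AS u v u' v')
  (antidiag_invariant_const mn_coprime BS u v u' v').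
Qed.

Lemma wdeg_cycle_joining u v : wdeg g (u, v) = (m * n)%:R^-1.
Proof.
have [_ g_marg_l _ _ _] := g_joining.
have := g_marg_l u.
rewrite (eq_bigr _ (fun v' _ => wdeg_cycle_joining_const u v' u v)).
rewrite sumr_const card_ord wdeg_cycle // => deg_n.
rewrite natrM invfM -deg_n -(mulr_natr (wdeg g (u, v))) mulfK //.
by rewrite pnatr_eq0 -lt0n (ltn_trans _ n_gt2).
Qed.

End CycleJoinings.

Theorem cycles_weakly_disjoint (R : realType) m n :
  (2 < m)%N -> (2 < n)%N -> coprime m n ->
  weakly_disjoint (cycle_w R m) (cycle_w R n).
Proof.
move=> m_gt2 n_gt2 mn_coprime g g_joining u v.
rewrite (wdeg_cycle_joining m_gt2 n_gt2 g_joining) //.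
by rewrite !wdeg_cycle // natrM invfM.
Qed.

Section DiagonalJoining.
Variable R : realType.
Variables m n : nat.
Hypotheses (m_gt2 : (2 < m)%N) (n_gt2 : (2 < n)%N).
Variable c : 'I_m -> 'I_n -> R.
Hypothesis c_ge0 : forall u v, 0 <= c u v.
Hypothesis c_diag : forall u v, c (ordS u) (ordS v) = c u v.
Hypothesis mass_gt0 : 0 < \sum_u \sum_v c u v.

Local Notation mass := (\sum_u \sum_v c u v).

Definition diag_step (x y : 'I_m * 'I_n) : bool :=
  (y.1 == ordS x.1) && (y.2 == ordS x.2).

Definition diag_joining (x y : 'I_m * 'I_n) : R :=
  ((diag_step x y)%:R * c x.1 x.2 + (diag_step y x)%:R * c y.1 y.2)
  / (2 * mass).

Lemma c_ord_pred u v : c (ord_pred u) (ord_pred v) = c u v.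
Proof. by rewrite -c_diag !ord_predK. Qed.

Lemma sum_diag_joining_r u v u' : \sum_v' diag_joining (u, v) (u', v') =
  ((u' == ordS u)%:R + (u' == ord_pred u)%:R) * (c u v / (2 * mass)).
Proof.
rewrite /diag_joining /diag_step /= -mulr_suml big_split /=.
under eq_bigr do rewrite -mulnb natrM mulrAC mulrC.
under [X in _ + X]eq_bigr
  do rewrite !eq_ordS_ord_pred -mulnb natrM mulrAC mulrC.
rewrite !sum_indicator.
by case: (u' =P ord_pred u) => [->|_] /=; rewrite ?c_ord_pred; ring.
Qed.

Lemma sum_diag_joining_l u v v' : \sum_u' diag_joining (u, v) (u', v') =
  ((v' == ordS v)%:R + (v' == ord_pred v)%:R) * (c u v / (2 * mass)).
Proof.
rewrite /diag_joining /diag_step /= -mulr_suml big_split /=.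
under eq_bigr do rewrite -mulnb natrM -mulrA.
under [X in _ + X]eq_bigr
  do rewrite !eq_ordS_ord_pred -mulnb natrM -mulrA.
rewrite !sum_indicator.
by case: (v' =P ord_pred v) => [->|_] /=; rewrite ?c_ord_pred; ring.
Qed.

Lemma wdeg_diag_joining u v : wdeg diag_joining (u, v) = c u v / mass.
Proof.
rewrite /wdeg sum_pairE.
under eq_bigr do rewrite sum_diag_joining_r mulrDl.
rewrite big_split /= !sum_indicator.
by field; rewrite lt0r_neq0.
Qed.

Lemma row_mass u : (\sum_v c u v) *+ m = mass.
Proof.
pose row w := \sum_v c w v.
have rowS w : row (ordS w) = row w.
  rewrite /row (reindex_inj (@ordS_inj n)).
  by apply: eq_bigr => v _; rewrite c_diag.
transitivity (\sum_(w : 'I_m) row u); first by rewrite sumr_const card_ord.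
by apply: eq_bigr => w _; exact: ordS_invariant_const rowS u w.
Qed.

Lemma column_mass v : (\sum_u c u v) *+ n = mass.
Proof.
pose col z := \sum_u c u z.
have colS z : col (ordS z) = col z.
  rewrite /col (reindex_inj (@ordS_inj m)).
  by apply: eq_bigr => u _; rewrite c_diag.
transitivity (\sum_(z : 'I_n) col v); first by rewrite sumr_const card_ord.
rewrite [RHS]exchange_big.
by apply: eq_bigr => z _; exact: ordS_invariant_const colS v z.
Qed.

Lemma diag_joining_is_joining :
  weight_joining (cycle_w R m) (cycle_w R n) diag_joining.
Proof.
have mass_neq0 : mass != 0 := lt0r_neq0 mass_gt0.
have marginal k (s : R) : s *+ k = mass -> s / mass = k%:R^-1.
  move=> s_mass; have s_neq0 : s != 0.
    by apply: contra_neq mass_neq0 => s0; rewrite -s_mass s0 mul0rn.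
  by rewrite -s_mass -(mulr_natr s) invfM mulVKf.
split.
- split.
  + move=> x y; apply: divr_ge0; last by rewrite mulr_ge0 ?ltW.
    by rewrite addr_ge0 // mulr_ge0.
  + by move=> x y; rewrite /diag_joining addrC.
  + rewrite sum_pairE.
    under eq_bigr do under eq_bigr do rewrite -/(wdeg _ _) wdeg_diag_joining.
    under eq_bigr do rewrite -mulr_suml.
    by rewrite -mulr_suml divff.
- move=> u; under eq_bigr do rewrite wdeg_diag_joining.
  by rewrite -mulr_suml wdeg_cycle // (marginal m) // row_mass.
- move=> v; under eq_bigr do rewrite wdeg_diag_joining.
  by rewrite -mulr_suml wdeg_cycle // (marginal n) // column_mass.
- move=> u u' v.
  rewrite wdeg_cycle // sum_diag_joining_r cycle_wE // wdeg_diag_joining natrM.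
  by field; rewrite mass_neq0 pnatr_eq0 -lt0n (ltn_trans _ m_gt2).
- move=> u v v'.
  rewrite wdeg_cycle // sum_diag_joining_l cycle_wE // wdeg_diag_joining natrM.
  by field; rewrite mass_neq0 pnatr_eq0 -lt0n (ltn_trans _ n_gt2).
Qed.

Lemma diag_joining_antidiag u v : diag_joining (u, v) (ordS u, ord_pred v) = 0.
Proof.
rewrite /diag_joining /diag_step /= eqxx [ord_pred v == _]eq_sym.
rewrite (negbTE (ordS_neq_ord_pred n_gt2 v)) [u == _]eq_sym.
by rewrite (negbTE (ordS_ordS_neq m_gt2 u)) /= !mul0r addr0 mul0r.
Qed.

End DiagonalJoining.

Section CongruenceClasses.
Variable R : realType.
Variables m n d : nat.

Definition congr_class (u : 'I_m) (v : 'I_n) : R :=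
  ((u %% d)%N == (v %% d)%N)%:R.

Lemma congr_class_ge0 u v : 0 <= congr_class u v.
Proof. exact: ler0n. Qed.

Lemma congr_class_diag : (d %| m)%N -> (d %| n)%N ->
  forall u v, congr_class (ordS u) (ordS v) = congr_class u v.
Proof.
move=> dvd_dm dvd_dn u v; rewrite /congr_class /= !modn_dvdm //.
by rewrite -[u.+1]addn1 -[v.+1]addn1 eqn_modDr.
Qed.

Lemma congr_class_mass_gt0 : (0 < m)%N -> (0 < n)%N ->
  0 < \sum_u \sum_v congr_class u v.
Proof.
move=> m_gt0 n_gt0; apply: (psumr_gt0 (i := Ordinal m_gt0)) => [u|].
  by apply: sumr_ge0 => v _; apply: congr_class_ge0.
apply: (psumr_gt0 (i := Ordinal n_gt0)) => [v|]; first exact: congr_class_ge0.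
by rewrite /congr_class /= eqxx ltr01.
Qed.

End CongruenceClasses.

Theorem proposition3p7 (R : realType) (m n : nat) :
  (3 <= m)%N -> (3 <= n)%N ->
  ~ strongly_disjoint (cycle_w R m) (cycle_w R n) /\
  (weakly_disjoint (cycle_w R m) (cycle_w R n) <-> coprime m n).
Proof.
move=> m_gt2 n_gt2.
have m_gt0 : (0 < m)%N by apply: leq_trans m_gt2.
have n_gt1 : (1 < n)%N by apply: leq_trans n_gt2.
have n_gt0 := ltnW n_gt1.
pose d := gcdn m n; pose c := @congr_class R m n d.
have c_diag := congr_class_diag R (dvdn_gcdl m n) (dvdn_gcdr m n).
have mass_gt0 := congr_class_mass_gt0 R d m_gt0 n_gt0.
have joining := diag_joining_is_joining m_gt2 n_gt2 (@congr_class_ge0 R m n d)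
  c_diag mass_gt0.
split.
- move=> strong.
  have := diag_joining_antidiag m_gt2 n_gt2 c (Ordinal m_gt0) (Ordinal n_gt0).
  rewrite (strong _ joining) /wtensor /= cycle_w_ordS cycle_w_ord_pred.
  by apply/eqP; rewrite mulf_neq0 // invr_eq0 pnatr_eq0 muln_eq0 -!lt0n ?m_gt0 ?n_gt0.
- split; last exact: cycles_weakly_disjoint.
  move=> weak; apply/negPn/negP => not_coprime.
  have d_gt1 : (1 < d)%N by rewrite ltn_neqAle eq_sym gcdn_gt0 m_gt0 andbT.
  have := weak _ joining (Ordinal m_gt0) (Ordinal n_gt1).
  rewrite (wdeg_diag_joining c_diag mass_gt0) /c /congr_class /=.
  rewrite mod0n modn_small // mul0r !wdeg_cycle //; apply/eqP.
  by rewrite eq_sym mulf_neq0 // invr_eq0 pnatr_eq0 -lt0n ?m_gt0 ?n_gt0.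
Qed.
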